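(* Suppose Assumptions A1, A2 (SDSD) and A3 hold for the steady state $(x^s,u^s)$ and discount factor $\gamma\in(0,1)$. Define $W(x):=V_\star^\gamma(x)+\lambda(x)$, where $\lambda$ and $\rho\in\mathcal{K}$ are the functions from Assumption A2. Then, for all $x_0\in\mathbb{X}_0$, $W$ is a Lyapunov function for the closed-loop system $x_{k+1}=f(x_k,\pi_\star^\gamma(x_k))$: (a) $W(x)\ge \rho(\|x-x^s\|)$; (b) there exists $\alpha\in\mathcal{K}$ with $W(x)\le \alpha(\|x-x^s\|)$; (c) $W(f(x,\pi_\star^\gamma(x)))-W(x)\le -\rho(\|x-x^s\|)$; and the closed-loop system under the optimal policy $\pi_\star^\gamma$ (equivalently, under an optimal policy of the modified problem with stage cost $\hat L^\gamma$) is asymptotically stable at $x^s$, i.e. there is $\beta\in\mathcal{KL}$ with $\|x_k^{\pi_\star^\gamma}-x^s\|\le\beta(\|x_0-x^s\|,k)$ for all $k\ge0$ and all $x_0\in\mathbb{X}_0$.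
   Context: Setting: discrete-time system $x_+=f(x,u)$ with $x\in\mathbb{R}^{n_x}$, $u\in\mathbb{R}^{n_u}$, stage cost $L(x,u)$, constraint set $\mathbb{Z}:=\{(x,u): h(x,u)\le 0\}$, with the convention $L(x,u)=\infty$ for $(x,u)\notin\mathbb{Z}$, and discount factor $\gamma\in(0,1)$. For a policy $\pi$ (a map $x\mapsto u$) the closed-loop trajectory is $x_{k+1}^\pi=f(x_k^\pi,\pi(x_k^\pi))$, $x_0^\pi=x_0$. $\mathbb{X}_0:=\{x_0:\exists\pi \text{ with } h(x_k^\pi,\pi(x_k^\pi))\le0\ \forall k\ge0\}$ and $\Pi:=\{\pi: h(x_k^\pi,\pi(x_k^\pi))\le 0\ \forall x_0\in\mathbb{X}_0,\forall k\ge 0\}$. The optimal value function is $V_\star^\gamma(x_0):=\min_{\pi\in\Pi}\sum_{k=0}^\infty\gamma^kL(x_k^\pi,\pi(x_k^\pi))$ and $\pi_\star^\gamma$ denotes an optimal policy; it satisfies the Bellman equation $V_\star^\gamma(x)=\min_{\pi\in\Pi}L(x,\pi(x))+\gamma V_\star^\gamma(f(x,\pi(x)))$. $(x^s,u^s)$ is a steady state, $x^s=f(x^s,u^s)$, normalized so that $L(x^s,u^s)=0$. Assumption A1: $\mathbb{Z}$ and $\mathbb{X}_0$ are compact and $|L(x,u)|<\infty$ for all $(x,u)\in\mathbb{Z}$. Assumption A2 (Strong Discounted Strict Dissipativity, SDSD): there exist a function $\lambda$, continuous at $x^s$, bounded on bounded sets, with $\lambda(x^s)=0$, and $\rho\in\mathcal{K}$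 such that for all $(x,u)\in\mathbb{Z}$: (i) $L(x,u)+\lambda(x)-\gamma\lambda(f(x,u))\ge\rho(\|x-x^s\|)$; (ii) $L(x,u)+\lambda(x)-\lambda(f(x,u))+(\gamma-1)V_\star^\gamma(f(x,u))\ge\rho(\|x-x^s\|)$. Assumption A3: $V_\star^\gamma$ is continuous at $x^s$ and bounded on $\mathbb{X}_0$. Modified cost: $\hat L^\gamma(x,u):=L(x,u)+\lambda(x)-\gamma\lambda(f(x,u))$; it is known (for bounded $\lambda$) that the discounted problem with stage cost $\hat L^\gamma$ has the same optimal policies as the original one and optimal value $V_\star^\gamma+\lambda$. Comparison functions: $\mathcal{K}$ = continuous, strictly increasing $\alpha:\mathbb{R}_{\ge0}\to\mathbb{R}_{\ge0}$ with $\alpha(0)=0$; $\mathcal{L}$ = continuous strictly decreasing functions tending to $0$; $\mathcal{KL}$ = continuous $\beta(s,t)$ with $\beta(\cdot,t)\in\mathcal{K}$ and $\beta(s,\cdot)\in\mathcal{L}$. *)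

From HB Require Import structures.
From mathcomp Require Import all_boot all_order all_algebra.
From mathcomp Require Import all_classical all_reals all_analysis.
Set Implicit Arguments. Unset Strict Implicit. Unset Printing Implicit Defensive.
Import Order.TTheory GRing.Theory Num.Theory.
Import numFieldNormedType.Exports.
Local Open Scope classical_set_scope.
Local Open Scope ring_scope.

Section Defs.
Variables (R : realType) (nx nu nh : nat).
Local Notation X := 'rV[R]_nx.
Local Notation U := 'rV[R]_nu.

Definition traj (f : X -> U -> X) (pi : X -> U) (x0 : X) (k : nat) : X :=
  iter k (fun x => f x (pi x)) x0.

Definition Zset (h : X -> U -> 'rV[R]_nh) : set (X * U) :=
  [set z | forall i, h z.1 z.2 0 i <= 0].

Definition feasible (f : X -> U -> X) (h : X -> U -> 'rV[R]_nh)
  (pi : X -> U) (x0 : X) : Prop :=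
  forall k, Zset h (traj f pi x0 k, pi (traj f pi x0 k)).

Definition X0set f h : set X := [set x0 | exists pi, feasible f h pi x0].

Definition Piset f h : set (X -> U) :=
  [set pi | forall x0, X0set f h x0 -> feasible f h pi x0].

(* discounted cost of policy pi from x0; L takes values in \bar R
   (convention L = +oo outside Z).  The infinite sum is the limit of the
   partial sums; a non-convergent series is assigned the value +oo. *)
Definition dcost (gamma : R) (f : X -> U -> X) (L : X -> U -> \bar R)
  (pi : X -> U) (x0 : X) : \bar R :=
  let s := fun n : nat =>
    (\sum_(0 <= k < n) ((gamma ^+ k)%:E * L (traj f pi x0 k) (pi (traj f pi x0 k))))%E in
  if `[< cvgn s >] then limn s else +oo%E.

Definition Vstar (gamma : R) f h L (x0 : X) : \bar R :=
  ereal_inf [set dcost gamma f L pi x0 | pi in Piset f h].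

End Defs.

(* comparison functions on R_{>=0}, represented as functions R -> R *)
Definition classK {R : realType} (a : R -> R) : Prop :=
  [/\ a 0 = 0,
      {within [set s : R | 0 <= s], continuous a} &
      (forall s t : R, 0 <= s -> s < t -> a s < a t)].

Definition classL {R : realType} (g : R -> R) : Prop :=
  [/\ {within [set t : R | 0 <= t], continuous g},
      (forall s t : R, 0 <= s -> s < t -> g t < g s) &
      (g t @[t --> +oo] --> (0 : R))].

Definition classKL {R : realType} (b : R -> R -> R) : Prop :=
  [/\ {within [set p : R * R | 0 <= p.1 /\ 0 <= p.2],
        continuous (fun p : R * R => b p.1 p.2)},
      (forall t : R, 0 <= t -> classK (fun s => b s t)) &
      (forall s : R, 0 < s -> classL (b s))].

From HB Require Import structures.
From mathcomp Require Import all_boot all_order all_algebra.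
From mathcomp Require Import all_classical all_reals all_analysis.
From mathcomp Require Import ring lra.
Set Implicit Arguments. Unset Strict Implicit. Unset Printing Implicit Defensive.
Import Order.TTheory GRing.Theory Num.Theory.
Import numFieldNormedType.Exports.
Local Open Scope classical_set_scope.
Local Open Scope ring_scope.

(* Combining the Bellman equation
   V*(x) = L(x, pistar x) + gamma V*(x+) with dissipation inequality (ii)
   gives the decrease W(x+) - W(x) <= - rho |x - xs|, property (c); with
   inequality (i) it gives rho |x - xs| + gamma W(x+) <= W(x), which iterated
   shows W >= 0 and then property (a).  Since W is bounded on the compact set
   X0, continuous at xs and W(xs) <= 0, it is dominated by a class-K function
   of |x - xs|, property (b).  The KL estimate then follows from a general
   discrete-time Lyapunov theorem. *)

Section LipschitzEstimates.
Variable R : realType.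
Implicit Types a b s t : R.

Lemma min1_lipschitz a b : `|Num.min 1 a - Num.min 1 b| <= `|a - b|.
Proof.
case: (lerP 1 a) => ha; case: (lerP 1 b) => hb.
- by rewrite subrr normr0.
- rewrite !ger0_norm; lra.
- rewrite !ler0_norm; lra.
- by [].
Qed.

Lemma max0_lipschitz a b : `|Num.max a 0 - Num.max b 0| <= `|a - b|.
Proof.
case: (lerP 0 a) => ha; case: (lerP 0 b) => hb.
- by [].
- rewrite !ger0_norm; lra.
- rewrite distrC (distrC a) !ger0_norm; lra.
- by rewrite subrr normr0.
Qed.

Lemma expRN_lipschitz a b : 0 <= a -> 0 <= b ->
  `|expR (- a) - expR (- b)| <= `|a - b|.
Proof.
wlog ab : a b / a <= b.
  move=> H a0 b0; have [h|h] := orP (le_total a b).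
    exact: H.
  by rewrite distrC (distrC a); exact: H.
move=> a0 b0.
have e : expR (- b) = expR (- a) * expR (a - b) by rewrite -expRD; congr expR; lra.
have h1 := expR_ge1Dx (a - b).
have h2 : expR (- a) <= 1 by rewrite expR_le1; lra.
have h3 : expR (a - b) <= 1 by rewrite expR_le1; lra.
have h4 := expR_gt0 (- a).
rewrite e ger0_norm; last by rewrite subr_ge0 ler_piMr // ltW.
rewrite ler0_norm; last lra.
have : expR (- a) * (1 - expR (a - b)) <= 1 * (1 - expR (a - b)).
  by apply: ler_wpM2r; lra.
nra.
Qed.

Lemma mul_expRN_dist s t s0 t0 : 0 <= s0 -> 0 <= t -> 0 <= t0 ->
  `|s * expR (- t) - s0 * expR (- t0)| <= `|s - s0| + s0 * `|t - t0|.
Proof.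
move=> s00 t0' t00.
have -> : s * expR (- t) - s0 * expR (- t0) =
  (s - s0) * expR (- t) + s0 * (expR (- t) - expR (- t0)) by ring.
apply: le_trans (ler_normD _ _) _; rewrite !normrM (ger0_norm s00).
apply: lerD.
  rewrite (ger0_norm (expR_ge0 _)) -[leRHS]mulr1; apply: ler_wpM2l => //.
  by rewrite expR_le1; lra.
by apply: ler_wpM2l => //; exact: expRN_lipschitz.
Qed.

End LipschitzEstimates.

Lemma within_continuous_eps (R : realType) (A : set R) (g : R -> R) :
  (forall x, A x -> forall e, 0 < e -> exists2 r, 0 < r &
     forall y, A y -> `|y - x| < r -> `|g y - g x| < e) ->
  {within A, continuous g}.
Proof.
move=> H; apply/subspace_continuousP => x Ax.
apply/cvgrPdist_lt => e e0.
have [r r0 Hr] := H x Ax e e0.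
rewrite near_withinE; apply/nbhs_ballP; exists r => //= y.
rewrite -ball_normE /= => xy Ay.
by rewrite distrC; apply: Hr => //; rewrite distrC.
Qed.

Lemma within_continuous2_eps (R : realType) (A : set (R * R)) (g : R * R -> R) :
  (forall x, A x -> forall e, 0 < e -> exists2 r, 0 < r &
     forall y, A y -> `|y.1 - x.1| < r -> `|y.2 - x.2| < r -> `|g y - g x| < e) ->
  {within A, continuous g}.
Proof.
move=> H; apply/subspace_continuousP => x Ax.
apply/cvgrPdist_lt => e e0.
have [r r0 Hr] := H x Ax e e0.
rewrite near_withinE; apply/nbhs_ballP; exists r => //= y [b1 b2] Ay.
move: b1 b2; rewrite -!ball_normE /= => b1 b2.
by rewrite distrC; apply: Hr => //; rewrite distrC.
Qed.

Section ClassK.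
Variables (R : realType) (a : R -> R).
Hypothesis aK : classK a.

Lemma classK_ge0 s : 0 <= s -> 0 <= a s.
Proof.
have [a0 _ a_incr] := aK; move=> s0.
have [->|sn0] := eqVneq s 0; first by rewrite a0.
by rewrite -a0 ltW // a_incr // lt_neqAle eq_sym sn0.
Qed.

Lemma classK_gt0 s : 0 < s -> 0 < a s.
Proof. by have [a0 _ a_incr] := aK; move=> s0; rewrite -a0 a_incr. Qed.

Lemma classK_le s t : 0 <= s -> s <= t -> a s <= a t.
Proof.
have [_ _ a_incr] := aK; move=> s0; rewrite le_eqVlt => /orP[/eqP -> //|st].
exact/ltW/a_incr.
Qed.

Lemma classK_le_of_lt s t : 0 <= t -> a s < a t -> s <= t.
Proof.
have [_ _ a_incr] := aK; move=> t0 ast.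
rewrite leNgt; apply/negP => ts; have := a_incr _ _ t0 ts; lra.
Qed.

Lemma classK_small e : 0 < e ->
  exists2 eta, 0 < eta & forall s, 0 <= s -> s <= eta -> a s <= e.
Proof.
have [a0 a_cont a_incr] := aK; move=> e0.
have /subspace_continuousP/(_ 0 (lexx 0)) := a_cont.
move/cvgrPdist_lt/(_ e e0); rewrite near_withinE => /nbhs_ballP[r r0 Hr].
exists (r / 2); first by rewrite divr_gt0.
move=> s s0 sr.
have sball : ball (0 : R) r s.
  by rewrite -ball_normE /= sub0r normrN ger0_norm //; move: r0 => /=; lra.
have := Hr s sball s0.
by rewrite /from_subspace a0 sub0r normrN ger0_norm ?classK_ge0 // => /ltW.
Qed.

End ClassK.

Section KLConstruction.
Variable R : realType.

(* A datum [(s', k, d)] (initial distance [s'], time [k], observed distance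
   [d]) contributes the bump [kl_term s t s' k d] to the comparison function:
   it equals [d] at [(s', k)], is nondecreasing in [s] and nonincreasing in
   [t], and is Lipschitz in [(s, t)] on every half-line [s >= m > 0]. *)
Definition kl_term (s t s' : R) (k : nat) (d : R) : R :=
  d * Num.min 1 (s / s') * expR (- Num.max (t - k%:R) 0).

(* The family [P] of data, supremum of its bumps, and the KL candidate
   obtained by adding the strictly monotone term [s * expR (- t)]. *)
Definition kl_bumps (P : R -> nat -> R -> Prop) (s t : R) : set R :=
  [set y | y = 0 \/ exists s' k d, P s' k d /\ y = kl_term s t s' k d].

Definition kl_sup (P : R -> nat -> R -> Prop) (s t : R) : R :=
  sup (kl_bumps P s t).

Definition kl_beta (P : R -> nat -> R -> Prop) (s t : R) : R :=
  kl_sup P s t + s * expR (- t).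

Definition kl_data (P : R -> nat -> R -> Prop) (B : R) : Prop :=
  0 <= B /\ forall s k d, P s k d -> [/\ 0 <= s, 0 <= d & d <= B].

Lemma expR_decay_bnd (t : R) (k : nat) :
  0 < expR (- Num.max (t - k%:R) 0) /\ expR (- Num.max (t - k%:R) 0) <= 1.
Proof.
split; first exact: expR_gt0.
by rewrite expR_le1 oppr_le0 le_max lexx orbT.
Qed.

Lemma min1_ratio_bnd (s s' : R) : 0 <= s -> 0 <= s' ->
  0 <= Num.min 1 (s / s') <= 1.
Proof.
move=> s0 s'0; rewrite ge_min lexx /= andbT le_min ler01 /=.
exact: divr_ge0.
Qed.

Lemma kl_term_le (s t s' : R) k d : 0 <= d -> kl_term s t s' k d <= d.
Proof.
move=> d0; rewrite /kl_term; have [e0 e1] := expR_decay_bnd t k.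
have m1 : Num.min 1 (s / s') <= 1 by rewrite ge_min lexx.
set m := Num.min _ _ in m1 *; set e := expR _ in e0 e1 *.
have : d * e * m <= d * e * 1.
  by apply: ler_wpM2l => //; apply: mulr_ge0 => //; exact: ltW.
have : d * e <= d * 1 by apply: ler_wpM2l.
nra.
Qed.

Lemma kl_term_le_decay (s t s' : R) k d : 0 <= d ->
  kl_term s t s' k d <= d * expR (- Num.max (t - k%:R) 0).
Proof.
move=> d0; rewrite /kl_term; have [e0 _] := expR_decay_bnd t k.
have m1 : Num.min 1 (s / s') <= 1 by rewrite ge_min lexx.
set m := Num.min _ _ in m1 *; set E := expR _ in e0 *.
have := mulr_ge0 d0 (ltW e0).
nra.
Qed.

Lemma kl_term_le_ratio (s t s' : R) k d : 0 <= s -> 0 <= s' -> 0 <= d ->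
  kl_term s t s' k d <= d * Num.min 1 (s / s').
Proof.
move=> s0 s'0 d0; rewrite /kl_term; have [_ e1] := expR_decay_bnd t k.
have /andP[m0 _] := min1_ratio_bnd s0 s'0.
by rewrite -[leRHS]mulr1 ler_wpM2l // mulr_ge0.
Qed.

Lemma kl_term_mono_s (s1 s2 t s' : R) k d :
  0 <= s1 -> s1 <= s2 -> 0 <= s' -> 0 <= d ->
  kl_term s1 t s' k d <= kl_term s2 t s' k d.
Proof.
move=> s10 s12 s'0 d0; rewrite /kl_term.
have [E0 _] := expR_decay_bnd t k.
apply: ler_wpM2r; first exact: ltW.
apply: ler_wpM2l => //.
rewrite le_min ge_min lexx /= ge_min.
by apply/orP; right; apply: ler_wpM2r => //; rewrite invr_ge0.
Qed.

Lemma kl_term_mono_t (s t1 t2 s' : R) k d :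
  0 <= s -> t1 <= t2 -> 0 <= s' -> 0 <= d ->
  kl_term s t2 s' k d <= kl_term s t1 s' k d.
Proof.
move=> s0 t12 s'0 d0; rewrite /kl_term.
have /andP[A0 _] := min1_ratio_bnd s0 s'0.
apply: ler_wpM2l; first exact: mulr_ge0.
rewrite ler_expR lerN2 ge_max; apply/andP; split.
  by rewrite le_max lerD2r t12.
by rewrite le_max lexx orbT.
Qed.

Lemma min1_ratio_lipschitz (m s1 s2 s' : R) :
  0 < m -> m <= s1 -> m <= s2 -> 0 <= s' ->
  `|Num.min 1 (s1 / s') - Num.min 1 (s2 / s')| <= `|s1 - s2| / m.
Proof.
move=> m0 ms1 ms2 s'0.
have [->|s'p] : s' = 0 \/ 0 < s'.
  by rewrite le_eqVlt in s'0; case/orP: s'0 => [/eqP <-|s'p]; [left|right].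
  by rewrite invr0 !mulr0 subrr normr0 divr_ge0 ?normr_ge0 ?ltW.
case: (lerP s' m) => hs'.
  have h1 : 1 <= s1 / s' by rewrite ler_pdivlMr // mul1r; apply: le_trans ms1.
  have h2 : 1 <= s2 / s' by rewrite ler_pdivlMr // mul1r; apply: le_trans ms2.
  by rewrite (min_l h1) (min_l h2) subrr normr0 divr_ge0 ?normr_ge0 ?ltW.
apply: le_trans (min1_lipschitz _ _) _.
rewrite -mulrBl normrM (gtr0_norm (x := s'^-1)) ?invr_gt0 //.
apply: ler_wpM2l; first exact: normr_ge0.
by rewrite lef_pV2 ?posrE // ltW.
Qed.

Lemma expR_decay_lipschitz (t1 t2 : R) k :
  `|expR (- Num.max (t1 - k%:R) 0) - expR (- Num.max (t2 - k%:R) 0)|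
    <= `|t1 - t2|.
Proof.
have ha : 0 <= Num.max (t1 - k%:R) 0 by rewrite le_max lexx orbT.
have hb : 0 <= Num.max (t2 - k%:R) 0 by rewrite le_max lexx orbT.
apply: le_trans (expRN_lipschitz ha hb) _.
apply: le_trans (max0_lipschitz _ _) _.
by have -> : t1 - k%:R - (t2 - k%:R) = t1 - t2 by ring.
Qed.

Lemma kl_term_lipschitz (B m s1 s2 t1 t2 s' : R) k d :
  0 <= d -> d <= B -> 0 <= s' -> 0 < m -> m <= s1 -> m <= s2 ->
  kl_term s1 t1 s' k d - kl_term s2 t2 s' k d
    <= B * (`|t1 - t2| + `|s1 - s2| / m).
Proof.
move=> d0 dB s'0 m0 ms1 ms2; rewrite /kl_term.
have hA := min1_ratio_lipschitz m0 ms1 ms2 s'0.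
have hE := expR_decay_lipschitz t1 t2 k.
have /andP[A10 A11] := min1_ratio_bnd (le_trans (ltW m0) ms1) s'0.
have /andP[A20 A21] := min1_ratio_bnd (le_trans (ltW m0) ms2) s'0.
have [E10 E11] := expR_decay_bnd t1 k; have [E20 E21] := expR_decay_bnd t2 k.
set A1 := Num.min 1 _ in hA A10 A11 *; set A2 := Num.min 1 _ in hA A20 A21 *.
set E1 := expR _ in hE E10 E11 *; set E2 := expR _ in hE E20 E21 *.
set a := `|s1 - s2| / m in hA *; set b := `|t1 - t2| in hE *.
have h1 : A1 * (E1 - E2) <= b.
  apply: le_trans (ler_norm _) _; rewrite normrM -[leRHS]mul1r.
  by apply: (ler_pM (normr_ge0 _) (normr_ge0 _) _ hE); rewrite ger0_norm.
have h2 : E2 * (A1 - A2) <= a.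
  apply: le_trans (ler_norm _) _; rewrite normrM -[leRHS]mul1r.
  by apply: (ler_pM (normr_ge0 _) (normr_ge0 _) _ hA); rewrite ger0_norm // ltW.
have -> : d * A1 * E1 - d * A2 * E2 = d * (A1 * (E1 - E2) + E2 * (A1 - A2)) by ring.
have hab : 0 <= b + a by apply: addr_ge0; [exact: normr_ge0|rewrite /a divr_ge0 // ?ltW].
apply: le_trans (_ : d * (b + a) <= _).
  by apply: ler_wpM2l => //; apply: lerD.
by apply: ler_wpM2r.
Qed.

Section Supremum.
Variables (P : R -> nat -> R -> Prop) (B : R).
Hypothesis HP : kl_data P B.

Lemma kl_bumps_ub s t y : kl_bumps P s t y -> y <= B.
Proof.
case: HP => B0 Hd [->//|[s' [k [d [Pd ->]]]]].
have [_ d0 dB] := Hd _ _ _ Pd.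
exact: le_trans (kl_term_le s t s' k d0) dB.
Qed.

Lemma kl_sup_ge s t y : kl_bumps P s t y -> y <= kl_sup P s t.
Proof.
move=> Sy; apply: (ub_le_sup _ Sy).
by exists B => z; apply: kl_bumps_ub.
Qed.

Lemma kl_sup_ge_term s t s' k d : P s' k d -> kl_term s t s' k d <= kl_sup P s t.
Proof. by move=> Pd; apply: kl_sup_ge; right; exists s', k, d. Qed.

Lemma kl_sup_le s t c : (forall y, kl_bumps P s t y -> y <= c) -> kl_sup P s t <= c.
Proof. by move=> H; apply: ge_sup => //; exists 0; left. Qed.

Lemma kl_sup_ge0 s t : 0 <= kl_sup P s t.
Proof. by apply: kl_sup_ge; left. Qed.

Lemma kl_sup_s0 t : kl_sup P 0 t = 0.
Proof.
apply/eqP; rewrite eq_le kl_sup_ge0 andbT.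
apply: kl_sup_le => y [->//|[s' [k [d [_ ->]]]]].
by rewrite /kl_term mul0r min_r ?ler01 // mulr0 mul0r.
Qed.

Lemma kl_sup_mono_s s1 s2 t : 0 <= s1 -> s1 <= s2 -> kl_sup P s1 t <= kl_sup P s2 t.
Proof.
move=> s10 s12; apply: kl_sup_le => y [->|[s' [k [d [Pd ->]]]]].
  exact: kl_sup_ge0.
have [s'0 d0 _] := HP.2 _ _ _ Pd.
exact: le_trans (kl_term_mono_s t k s10 s12 s'0 d0) (kl_sup_ge_term _ _ Pd).
Qed.

Lemma kl_sup_mono_t s t1 t2 : 0 <= s -> t1 <= t2 -> kl_sup P s t2 <= kl_sup P s t1.
Proof.
move=> s0 t12; apply: kl_sup_le => y [->|[s' [k [d [Pd ->]]]]].
  exact: kl_sup_ge0.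
have [s'0 d0 _] := HP.2 _ _ _ Pd.
exact: le_trans (kl_term_mono_t k s0 t12 s'0 d0) (kl_sup_ge_term _ _ Pd).
Qed.

Lemma kl_sup_lipschitz_le m s1 s2 t1 t2 : 0 < m -> m <= s1 -> m <= s2 ->
  kl_sup P s1 t1 <= kl_sup P s2 t2 + B * (`|t1 - t2| + `|s1 - s2| / m).
Proof.
move=> m0 ms1 ms2; apply: kl_sup_le => y [->|[s' [k [d [Pd ->]]]]].
  apply: addr_ge0; first exact: kl_sup_ge0.
  apply: mulr_ge0; first exact: HP.1.
  by apply: addr_ge0; [exact: normr_ge0|rewrite divr_ge0 // ltW].
have [s'0 d0 dB] := HP.2 _ _ _ Pd.
have := kl_term_lipschitz t1 t2 k d0 dB s'0 m0 ms1 ms2.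
have := kl_sup_ge_term s2 t2 Pd.
lra.
Qed.

Lemma kl_sup_dist m s1 s2 t1 t2 : 0 < m -> m <= s1 -> m <= s2 ->
  `|kl_sup P s1 t1 - kl_sup P s2 t2| <= B * (`|t1 - t2| + `|s1 - s2| / m).
Proof.
move=> m0 ms1 ms2; have H1 := kl_sup_lipschitz_le t1 t2 m0 ms1 ms2.
have H2 := kl_sup_lipschitz_le t2 t1 m0 ms2 ms1.
rewrite (distrC t2) (distrC s2) in H2.
by rewrite ler_norml; apply/andP; split; lra.
Qed.

End Supremum.

End KLConstruction.

Section KLBound.
Variables (R : realType) (P : R -> nat -> R -> Prop) (B : R).
Hypothesis HP : kl_data P B.
Hypothesis P_stable : forall e, 0 < e -> exists2 dl, 0 < dl &
  forall s k d, P s k d -> s <= dl -> d <= e.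
Hypothesis P_attractive : forall e, 0 < e -> exists T : nat,
  forall s k d, P s k d -> (T <= k)%N -> d <= e.

Lemma kl_sup_small e : 0 < e -> exists2 eta, 0 < eta &
  forall s t, 0 <= s -> s <= eta -> kl_sup P s t <= e.
Proof.
move=> e0; have [dl dl0 Hdl] := P_stable e0.
have B0 := HP.1; have B1 : 0 < B + 1 by lra.
exists (e * dl / (B + 1)); first by rewrite divr_gt0 // mulr_gt0.
move=> s t s0 seta; apply: kl_sup_le => y [->|[s' [k [d [Pd ->]]]]].
  exact: ltW.
have [s'0 d0 dB] := HP.2 _ _ _ Pd.
have [hs'|hs'] := lerP s' dl.
  exact: le_trans (kl_term_le s t s' k d0) (Hdl _ _ _ Pd hs').
(* a datum far from the origin contributes at most [d * s / s'] *)
apply: le_trans (kl_term_le_ratio t k s0 s'0 d0) _.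
have s'p : 0 < s' by apply: lt_trans hs'.
have q0 : 0 <= s / s' by rewrite divr_ge0.
have hq : s / s' <= e / (B + 1).
  apply: le_trans (_ : s / dl <= _).
    by rewrite ler_wpM2l // lef_pV2 ?posrE // ltW.
  apply: le_trans (_ : (e * dl / (B + 1)) / dl <= _).
    by rewrite ler_wpM2r // invr_ge0 ltW.
  by rewrite le_eqVlt; apply/orP; left; apply/eqP; field;
     rewrite ?gt_eqF ?lt0r_neq0.
have hq2 : s / s' * (B + 1) <= e by move: hq; rewrite ler_pdivlMr.
have m1 : Num.min 1 (s / s') <= s / s' by rewrite ge_min lexx orbT.
have /andP[m0 _] := min1_ratio_bnd s0 s'0.
nra.
Qed.

Lemma kl_sup_large e : 0 < e -> exists M : R,
  forall s t, 0 <= s -> M <= t -> kl_sup P s t <= e.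
Proof.
move=> e0; have [T HT] := P_attractive e0; have B0 := HP.1.
exists (T%:R + B / e) => s t s0 tM.
apply: kl_sup_le => y [->|[s' [k [d [Pd ->]]]]]; first exact: ltW.
have [s'0 d0 dB] := HP.2 _ _ _ Pd.
have [hk|hk] := leqP T k.
  exact: le_trans (kl_term_le _ _ _ _ d0) (HT _ _ _ Pd hk).
(* an early datum is damped by [expR (- (t - T))] <= e / B *)
apply: le_trans (kl_term_le_decay s t s' k d0) _.
have kT : k%:R <= T%:R :> R by rewrite ler_nat ltnW.
have Be0 : 0 <= B / e by rewrite divr_ge0 // ltW.
set x := t - T%:R.
have hx : B / e <= x by rewrite /x; lra.
have hE : expR (- Num.max (t - k%:R) 0) <= expR (- x).
  by rewrite ler_expR lerN2 le_max; apply/orP; left; rewrite /x; lra.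
have hEx : B * expR (- x) <= e.
  rewrite expRN ler_pdivrMr ?expR_gt0 //.
  have := expR_ge1Dx x.
  have : B <= x * e by move: hx; rewrite ler_pdivrMr.
  nra.
have E0 := expR_gt0 (- Num.max (t - k%:R) 0).
have Ex0 := expR_gt0 (- x).
nra.
Qed.

Lemma kl_beta_ge0 s t : 0 <= s -> 0 <= kl_beta P s t.
Proof.
move=> s0; rewrite /kl_beta; apply: addr_ge0; first exact: (kl_sup_ge0 HP s t).
by apply: mulr_ge0 => //; exact: expR_ge0.
Qed.

Lemma kl_beta_s0 t : kl_beta P 0 t = 0.
Proof. by rewrite /kl_beta (kl_sup_s0 HP) mul0r addr0. Qed.

Lemma kl_beta_cont_axis t0 e : 0 < e -> exists2 r, 0 < r &
  forall s t, 0 <= s -> 0 <= t -> `|s| < r ->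
    `|kl_beta P s t - kl_beta P 0 t0| < e.
Proof.
move=> e0; have e20 : 0 < e / 2 by rewrite divr_gt0.
have [eta eta0 Heta] := kl_sup_small e20.
exists (Num.min eta (e / 2)); first by rewrite lt_min eta0 e20.
move=> s t s0 t0'; rewrite ger0_norm // lt_min => /andP[hs1 hs2].
rewrite kl_beta_s0 subr0 ger0_norm ?kl_beta_ge0 // /kl_beta.
have h1 := Heta s t s0 (ltW hs1).
have h2 : expR (- t) <= 1 by rewrite expR_le1; lra.
have : s * expR (- t) <= s * 1 by apply: ler_wpM2l.
lra.
Qed.

(* Continuity of [kl_beta] off the axis: on [s >= s0 / 2] the function is
   Lipschitz with constants depending only on [B] and [s0]. *)
Lemma kl_beta_cont_pos s0 t0 e : 0 < s0 -> 0 <= t0 -> 0 < e ->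
  exists2 r, 0 < r & forall s t, 0 <= t -> `|s - s0| < r -> `|t - t0| < r ->
    `|kl_beta P s t - kl_beta P s0 t0| < e.
Proof.
move=> s0p t00 e0; have B0 := HP.1.
set c := 2 / s0; have c0 : 0 < c by rewrite divr_gt0.
set K := B + B * c + s0 + 1.
have K1 : 0 < K + 1 by have := mulr_ge0 B0 (ltW c0); rewrite /K; lra.
have m0 : 0 < s0 / 2 by rewrite divr_gt0.
exists (Num.min (s0 / 2) (e / (K + 1))); first by rewrite lt_min m0 divr_gt0.
move=> s t t0' hs ht; set r := Num.min _ _ in hs ht.
have rs : r <= s0 / 2 by rewrite ge_min lexx.
have re : r * (K + 1) <= e by rewrite -ler_pdivlMr // ge_min lexx orbT.
have ms : s0 / 2 <= s by have := ler_norm (s0 - s); rewrite distrC; lra.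
have ms0 : s0 / 2 <= s0 by lra.
have H1 := kl_sup_dist HP t t0 m0 ms ms0.
have H2 := mul_expRN_dist s (ltW s0p) t0' t00.
set a := `|t - t0| in H1 H2 ht; set b := `|s - s0| in H1 H2 hs.
have a0 : 0 <= a := normr_ge0 _.
have ebc : b / (s0 / 2) = c * b by rewrite /c; field; rewrite gt_eqF.
rewrite ebc in H1.
have hBa : B * a <= B * r by apply: ler_wpM2l => //; exact: ltW.
have hBcb : B * c * b <= B * c * r.
  by apply: ler_wpM2l; [rewrite mulr_ge0 // ltW|exact: ltW].
have hsa : s0 * a <= s0 * r by apply: ler_wpM2l; exact: ltW.
have eK : r * (K + 1) = B * r + B * c * r + s0 * r + r + r by rewrite /K; ring.
rewrite /kl_beta.
have -> : kl_sup P s t + s * expR (- t) - (kl_sup P s0 t0 + s0 * expR (- t0)) =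
  (kl_sup P s t - kl_sup P s0 t0) + (s * expR (- t) - s0 * expR (- t0)) by ring.
apply: le_lt_trans (ler_normD _ _) _.
have r0 : 0 < r by apply: le_lt_trans hs; exact: normr_ge0.
rewrite mulrDr mulrA in H1.
lra.
Qed.

Lemma kl_beta_cont s0 t0 e : 0 <= s0 -> 0 <= t0 -> 0 < e ->
  exists2 r, 0 < r & forall s t, 0 <= s -> 0 <= t ->
    `|s - s0| < r -> `|t - t0| < r -> `|kl_beta P s t - kl_beta P s0 t0| < e.
Proof.
move=> s00 t00 e0; have [s0p|s0_le0] := ltrP 0 s0.
  have [r r0 Hr] := kl_beta_cont_pos s0p t00 e0.
  by exists r => // s t _ t0'; exact: Hr.
have -> : s0 = 0 by apply/eqP; rewrite eq_le s0_le0 s00.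
have [r r0 Hr] := kl_beta_cont_axis t0 e0.
by exists r => // s t s0' t0'; rewrite subr0 => hs _; exact: Hr.
Qed.

Lemma kl_beta_classK t : 0 <= t -> classK (fun s => kl_beta P s t).
Proof.
move=> t0; split; first exact: kl_beta_s0.
  apply: within_continuous_eps => s0 /= s00 e e0.
  have [r r0 Hr] := kl_beta_cont s00 t0 e0.
  by exists r => // s /= s0' hs; apply: Hr => //; rewrite subrr normr0.
move=> s1 s2 s10 s12; rewrite /kl_beta.
have := kl_sup_mono_s HP t s10 (ltW s12).
have : s1 * expR (- t) < s2 * expR (- t) by rewrite ltr_pM2r ?expR_gt0.
lra.
Qed.

Lemma kl_beta_classL s : 0 < s -> classL (kl_beta P s).
Proof.
move=> s0; split.
- apply: within_continuous_eps => t0 /= t00 e e0.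
  have [r r0 Hr] := kl_beta_cont (ltW s0) t00 e0.
  by exists r => // t /= t0' ht; apply: Hr => //; [exact: ltW|rewrite subrr normr0].
- move=> t1 t2 t10 t12; rewrite /kl_beta.
  have := kl_sup_mono_t HP (ltW s0) (ltW t12).
  have : s * expR (- t2) < s * expR (- t1) by rewrite ltr_pM2l // ltr_expR ltrN2.
  lra.
- apply/cvgrPdist_lt => e e0.
  have e20 : 0 < e / 2 by rewrite divr_gt0.
  have [M1 HM1] := kl_sup_large e20.
  exists (Num.max M1 (Num.max (2 * s / e) 0)); split; first by rewrite num_real.
  move=> t; rewrite !gt_max => /andP[hM1 /andP[hM2 ht0]].
  have h1 := HM1 s t (ltW s0) (ltW hM1).
  have h2 : s * expR (- t) < e / 2.
    rewrite expRN ltr_pdivrMr ?expR_gt0 //.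
    have hE := expR_ge1Dx t.
    have : 2 * s < t * e by move: hM2; rewrite ltr_pdivrMr.
    nra.
  rewrite sub0r normrN ger0_norm; last exact: kl_beta_ge0 (ltW s0).
  rewrite /kl_beta; lra.
Qed.

Lemma kl_beta_classKL : classKL (kl_beta P).
Proof.
split; [|exact: kl_beta_classK|exact: kl_beta_classL].
apply: within_continuous2_eps => -[s0 t0] /= [s00 t00] e e0.
have [r r0 Hr] := kl_beta_cont s00 t00 e0.
by exists r => // -[s t] /= [s0' t0'] hs ht; apply: Hr.
Qed.

(* Every datum lies below [kl_beta]: the datum's own bump equals [d] at
   [(s, k)]; data with [s = 0] have [d = 0] by uniform stability. *)
Lemma kl_beta_bound s k d : P s k d -> d <= kl_beta P s k%:R.
Proof.
move=> Pd; have [s0 d0 dB] := HP.2 _ _ _ Pd.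
have E0 : 0 <= s * expR (- k%:R) by apply: mulr_ge0 => //; exact: expR_ge0.
rewrite /kl_beta; have [s_eq0|sn0] := eqVneq s 0.
  have : d <= 0.
    apply/ler_addgt0Pr => e e0; rewrite add0r; have [dl dl0 Hdl] := P_stable e0.
    by apply: Hdl Pd _; rewrite s_eq0 ltW.
  have := kl_sup_ge0 HP s k%:R; lra.
have := kl_sup_ge_term HP s k%:R Pd.
rewrite /kl_term divff // subrr min_l // maxxx oppr0 expR0 mulr1 mulr1.
lra.
Qed.

End KLBound.

Lemma KL_bound_exists (R : realType) (P : R -> nat -> R -> Prop) (B : R) :
  kl_data P B ->
  (forall e, 0 < e -> exists2 dl, 0 < dl &
     forall s k d, P s k d -> s <= dl -> d <= e) ->
  (forall e, 0 < e -> exists T : nat,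
     forall s k d, P s k d -> (T <= k)%N -> d <= e) ->
  exists beta : R -> R -> R,
    classKL beta /\ forall s k d, P s k d -> d <= beta s k%:R.
Proof.
move=> HP Pst Patt; exists (kl_beta P); split.
  exact: kl_beta_classKL HP Pst Patt.
exact: kl_beta_bound HP Pst.
Qed.

Lemma K_bound_exists (R : realType) (Q : R -> R -> Prop) (B : R) :
  0 <= B -> (forall s d, Q s d -> [/\ 0 <= s, 0 <= d & d <= B]) ->
  (forall e, 0 < e -> exists2 dl, 0 < dl &
     forall s d, Q s d -> s <= dl -> d <= e) ->
  exists alpha : R -> R, classK alpha /\ forall s d, Q s d -> d <= alpha s.
Proof.
move=> B0 HQ Qst.
pose P s (k : nat) d := k = 0%N /\ Q s d.
have [beta [[_ betaK _] Hbeta]] : exists beta : R -> R -> R,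
    classKL beta /\ forall s k d, P s k d -> d <= beta s k%:R.
  apply: (@KL_bound_exists _ P B).
  - by split=> // s k d [_ /HQ].
  - move=> e e0; have [dl dl0 Hdl] := Qst e e0.
    by exists dl => // s k d [_ Qd]; exact: Hdl.
  - by move=> e e0; exists 1%N => s k d [-> _].
exists (fun s => beta s 0); split; first exact: betaK.
by move=> s d Qd; have := Hbeta s 0%N d (conj erefl Qd); rewrite mulr0n.
Qed.

Section DiscreteLyapunov.
Variables (R : realType) (V : normedModType R) (F : V -> V) (S : set V).
Variables (xs : V) (W : V -> R) (rho alpha : R -> R).
Hypothesis S_invariant : forall x, S x -> S (F x).
Hypothesis S_bounded : exists M : R, forall x, S x -> `|x| <= M.
Hypothesis rhoK : classK rho.
Hypothesis alphaK : classK alpha.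
Hypothesis W_lower : forall x, S x -> rho `|x - xs| <= W x.
Hypothesis W_upper : forall x, S x -> W x <= alpha `|x - xs|.
Hypothesis W_decrease : forall x, S x -> W (F x) - W x <= - rho `|x - xs|.

Lemma iter_invariant x k : S x -> S (iter k F x).
Proof. by move=> Sx; elim: k => //= k IH; exact: S_invariant. Qed.

Lemma W_iter_nonincreasing x j k : S x -> (j <= k)%N ->
  W (iter k F x) <= W (iter j F x).
Proof.
move=> Sx /subnK <-; elim: (k - j)%N => [|n IH]; first by rewrite add0n.
rewrite addSn /=; apply: le_trans IH.
have := W_decrease (iter_invariant (n + j) Sx).
have := classK_ge0 rhoK (normr_ge0 (iter (n + j) F x - xs)); lra.
Qed.

Lemma iter_trapped x j k e : S x -> 0 <= e -> (j <= k)%N ->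
  alpha `|iter j F x - xs| < rho e -> `|iter k F x - xs| <= e.
Proof.
move=> Sx e0 jk h; apply: (classK_le_of_lt rhoK e0); apply: le_lt_trans h.
have := W_lower (iter_invariant k Sx).
have := W_iter_nonincreasing Sx jk.
have := W_upper (iter_invariant j Sx).
lra.
Qed.

Lemma trapping_radius e : 0 < e -> exists2 eta, 0 < eta &
  forall s, 0 <= s -> s <= eta -> alpha s < rho e.
Proof.
move=> e0; have re : 0 < rho e := classK_gt0 rhoK e0.
have [eta eta0 Heta] := classK_small alphaK (divr_gt0 re (ltr0Sn _ 1)).
by exists eta => // s s0 seta; have := Heta s s0 seta; lra.
Qed.

Lemma uniform_stability e : 0 < e -> exists2 eta, 0 < eta &
  forall x k, S x -> `|x - xs| <= eta -> `|iter k F x - xs| <= e.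
Proof.
move=> e0; have [eta eta0 Heta] := trapping_radius e0.
exists eta => // x k Sx hx.
exact: (iter_trapped Sx (ltW e0) (leq0n k) (Heta _ (normr_ge0 _) hx)).
Qed.

Lemma S_dist_bounded : exists2 B, 0 <= B & forall x, S x -> `|x - xs| <= B.
Proof.
have [M HM] := S_bounded; exists (`|M| + `|xs|).
  by apply: addr_ge0; exact: normr_ge0.
move=> x Sx; apply: le_trans (ler_normB _ _) _; apply: lerD => //.
exact: le_trans (HM x Sx) (ler_norm M).
Qed.

Lemma W_iter_decay x eta n : S x -> 0 <= eta ->
  (forall j, (j < n)%N -> eta < `|iter j F x - xs|) ->
  W (iter n F x) <= W x - n%:R * rho eta.
Proof.
move=> Sx eta0; elim: n => [_|n IH out]; first by rewrite mul0r subr0.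
have h1 := W_decrease (iter_invariant n Sx).
have h2 := classK_le rhoK eta0 (ltW (out n (ltnSn n))).
have h3 := IH (fun j jn => out j (ltnW jn)).
rewrite mulrSr /=; lra.
Qed.

(* Since [W] is nonnegative and bounded on [S], every trajectory enters the
   ball of radius [eta] within a uniform number of steps. *)
Lemma uniform_entrance eta : 0 < eta -> exists N : nat,
  forall x, S x -> exists2 j, (j < N)%N & `|iter j F x - xs| <= eta.
Proof.
move=> eta0; have [B B0 HB] := S_dist_bounded.
have q0 : 0 < rho eta := classK_gt0 rhoK eta0.
set C := alpha B; exists (Num.truncn (C / rho eta)).+1 => x Sx.
set N := (Num.truncn _).+1.
case: (pselect (exists2 j, (j < N)%N & `|iter j F x - xs| <= eta)) => // far.
have out : forall j, (j < N)%N -> eta < `|iter j F x - xs|.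
  by move=> j jN; rewrite ltNge; apply/negP => hj; apply: far; exists j.
exfalso.
have h1 := W_iter_decay Sx (ltW eta0) out.
have h2 := W_lower (iter_invariant N Sx).
have h3 := classK_ge0 rhoK (normr_ge0 (iter N F x - xs)).
have h4 : W x <= C.
  exact: le_trans (W_upper Sx) (classK_le alphaK (normr_ge0 _) (HB x Sx)).
have : C < N%:R * rho eta by rewrite -ltr_pdivrMr // truncnS_gt.
lra.
Qed.

Lemma uniform_attractivity e : 0 < e -> exists T : nat,
  forall x k, S x -> (T <= k)%N -> `|iter k F x - xs| <= e.
Proof.
move=> e0; have [eta eta0 Heta] := trapping_radius e0.
have [N HN] := uniform_entrance eta0.
exists N => x k Sx Nk; have [j jN hj] := HN x Sx.
exact: (iter_trapped Sx (ltW e0) (ltnW (leq_trans jN Nk)) (Heta _ (normr_ge0 _) hj)).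
Qed.

(* The data [(|x - xs|, k, |iter k F x - xs|)] are bounded, uniformly
   stable and uniformly attractive, so a KL function dominates them. *)
Theorem lyapunov_KL_estimate : exists beta : R -> R -> R, classKL beta /\
  forall x k, S x -> `|iter k F x - xs| <= beta `|x - xs| k%:R.
Proof.
pose P s k d := exists2 x, S x & s = `|x - xs| /\ d = `|iter k F x - xs|.
have [B B0 HB] := S_dist_bounded.
have [beta [KLbeta Hbeta]] : exists beta : R -> R -> R,
    classKL beta /\ forall s k d, P s k d -> d <= beta s k%:R.
  apply: (@KL_bound_exists _ P B).
  - split=> // s k d [x Sx [-> ->]]; split; try exact: normr_ge0.
    exact: HB (iter_invariant k Sx).
  - move=> e e0; have [eta eta0 Heta] := uniform_stability e0.
    by exists eta => // s k d [x Sx [-> ->]]; exact: Heta.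
  - move=> e e0; have [T HT] := uniform_attractivity e0.
    by exists T => s k d [x Sx [_ ->]]; exact: HT.
by exists beta; split => // x k Sx; apply: Hbeta; exists x.
Qed.

End DiscreteLyapunov.

Section Trajectories.
Variables (R : realType) (nx nu nh : nat).
Variables (f : 'rV[R]_nx -> 'rV[R]_nu -> 'rV[R]_nx)
  (h : 'rV[R]_nx -> 'rV[R]_nu -> 'rV[R]_nh).
Implicit Types (pi : 'rV[R]_nx -> 'rV[R]_nu) (x : 'rV[R]_nx).

Lemma trajS pi x k : traj f pi x k.+1 = f (traj f pi x k) (pi (traj f pi x k)).
Proof. by rewrite /traj iterS. Qed.

Lemma traj_shift pi x k : traj f pi x k.+1 = traj f pi (f x (pi x)) k.
Proof. by rewrite /traj iterSr. Qed.

Lemma Piset_step pi x : Piset f h pi -> X0set f h x ->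
  X0set f h (f x (pi x)) /\ Zset h (x, pi x).
Proof.
move=> Hpi Hx; have Hf := Hpi x Hx; split; last exact: (Hf 0%N).
by exists pi => k; rewrite -traj_shift; exact: Hf.
Qed.

Lemma traj_steady pi xs : f xs (pi xs) = xs -> forall k, traj f pi xs k = xs.
Proof. by move=> Hss; elim=> [//|k IH]; rewrite trajS IH Hss. Qed.

End Trajectories.

Section OptimalValue.
Variables (R : realType) (nx nu nh : nat).
Variables (f : 'rV[R]_nx -> 'rV[R]_nu -> 'rV[R]_nx)
  (L : 'rV[R]_nx -> 'rV[R]_nu -> \bar R)
  (h : 'rV[R]_nx -> 'rV[R]_nu -> 'rV[R]_nh).
Variables (gamma MV : R) (pistar : 'rV[R]_nx -> 'rV[R]_nu).
Hypothesis L_fin : forall x u, Zset h (x, u) -> L x u \is a fin_num.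
Hypothesis V_bounded : forall x, X0set f h x ->
  (`|Vstar gamma f h L x| <= MV%:E)%E.
Hypothesis pistar_adm : Piset f h pistar.
Hypothesis pistar_opt : forall x, X0set f h x ->
  dcost gamma f L pistar x = Vstar gamma f h L x.

Local Notation X0 := (X0set f h).
Local Notation V := (Vstar gamma f h L).

Lemma Vstar_fin x : X0 x -> V x = (fine (V x))%:E /\ `|fine (V x)| <= MV.
Proof. by move/V_bounded; case: (V x) => [r| |] //=; rewrite lee_fin. Qed.

Definition cost_sum (x : 'rV[R]_nx) (n : nat) : R :=
  \sum_(0 <= k < n) gamma ^+ k *
    fine (L (traj f pistar x k) (pistar (traj f pistar x k))).

Lemma cost_sum_cvg x : X0 x -> cost_sum x @ \oo --> fine (V x).
Proof.
move=> Hx; have [Vx _] := Vstar_fin Hx.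
have := pistar_opt Hx; rewrite /dcost /=.
set s := (fun n => _ : \bar R).
have -> : s = fun n => (cost_sum x n)%:E.
  apply/funext => n; rewrite /s /cost_sum -sumEFin; apply: eq_bigr => k _.
  by rewrite EFinM fineK // L_fin //; exact: pistar_adm.
case: asboolP => [cv lim_s|_]; last by rewrite Vx.
have : (fun n => (cost_sum x n)%:E) @ \oo --> (fine (V x))%:E.
  by rewrite -Vx -lim_s; exact: cv.
by move/fine_cvg.
Qed.

Lemma bellman x : X0 x -> fine (V x) =
  fine (L x (pistar x)) + gamma * fine (V (f x (pistar x))).
Proof.
move=> Hx; have Hx1 := (Piset_step pistar_adm Hx).1.
have shift : (fun n => cost_sum x n.+1) =
    fun n => fine (L x (pistar x)) + gamma * cost_sum (f x (pistar x)) n.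
  apply/funext => n; rewrite /cost_sum big_nat_recl // mulr_sumr expr0 mul1r.
  by congr (_ + _); apply: eq_bigr => k _; rewrite traj_shift exprS mulrA.
have c1 : (fun n => cost_sum x n.+1) @ \oo --> fine (V x).
  by rewrite (cvg_shiftS (cost_sum x)); exact: cost_sum_cvg.
have c2 : (fun n => fine (L x (pistar x)) + gamma * cost_sum (f x (pistar x)) n)
    @ \oo --> fine (L x (pistar x)) + gamma * fine (V (f x (pistar x))).
  apply: cvgD; first exact: cvg_cst.
  by apply: cvgM; [exact: cvg_cst|exact: cost_sum_cvg].
by rewrite shift in c1; exact: (cvg_unique _ c1 c2).
Qed.

End OptimalValue.

Section RotatedValue.
Variables (R : realType) (nx nu nh : nat).
Variables (f : 'rV[R]_nx -> 'rV[R]_nu -> 'rV[R]_nx)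
  (L : 'rV[R]_nx -> 'rV[R]_nu -> \bar R)
  (h : 'rV[R]_nx -> 'rV[R]_nu -> 'rV[R]_nh).
Variables (gamma MV : R) (pistar : 'rV[R]_nx -> 'rV[R]_nu).
Variables (xs : 'rV[R]_nx) (us : 'rV[R]_nu) (lam : 'rV[R]_nx -> R) (rho : R -> R).

Local Notation X0 := (X0set f h).
Local Notation V := (Vstar gamma f h L).

Hypothesis gamma_gt0 : 0 < gamma.
Hypothesis gamma_lt1 : gamma < 1.
Hypothesis L_fin : forall x u, Zset h (x, u) -> L x u \is a fin_num.
Hypothesis V_bounded : forall x, X0 x -> (`|V x| <= MV%:E)%E.
Hypothesis pistar_adm : Piset f h pistar.
Hypothesis pistar_opt : forall x, X0 x -> dcost gamma f L pistar x = V x.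
Hypothesis rhoK : classK rho.
Hypothesis sdsd_discounted : forall x u, Zset h (x, u) ->
  ((rho `|x - xs|)%:E <= L x u + (lam x)%:E - (gamma * lam (f x u))%:E)%E.
Hypothesis sdsd_value : forall x u, Zset h (x, u) ->
  ((rho `|x - xs|)%:E <= L x u + (lam x)%:E - (lam (f x u))%:E
                     + (gamma - 1)%:E * V (f x u))%E.

Definition rotated_value (x : 'rV[R]_nx) : R := fine (V x) + lam x.
Local Notation W := rotated_value.

Lemma X0_step x : X0 x -> X0 (f x (pistar x)).
Proof. by move=> Hx; have [] := Piset_step pistar_adm Hx. Qed.

Lemma sdsd_closed_loop x : X0 x ->
  rho `|x - xs| <= fine (L x (pistar x)) + lam x - gamma * lam (f x (pistar x)) /\
  rho `|x - xs| <= fine (L x (pistar x)) + lam x - lam (f x (pistar x))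
                   + (gamma - 1) * fine (V (f x (pistar x))).
Proof.
move=> Hx; have [Hx1 Zx] := Piset_step pistar_adm Hx.
have hL : L x (pistar x) = (fine (L x (pistar x)))%:E by rewrite fineK // L_fin.
have [hV _] := Vstar_fin V_bounded Hx1.
split; first by rewrite -lee_fin EFinB EFinD -hL; exact: sdsd_discounted.
by rewrite -lee_fin EFinD EFinB EFinD EFinM -hL -hV; exact: sdsd_value.
Qed.

(* Dissipation (i) plus Bellman: [W] decreases in the discounted sense. *)
Lemma W_discounted_decrease x : X0 x ->
  rho `|x - xs| + gamma * W (f x (pistar x)) <= W x.
Proof.
move=> Hx; have [h1 _] := sdsd_closed_loop Hx.
rewrite /W (bellman L_fin V_bounded pistar_adm pistar_opt Hx); lra.
Qed.

(* Dissipation (ii) plus Bellman: [W] decreases by [rho] along the loop. *)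
Lemma W_decrease x : X0 x ->
  W (f x (pistar x)) - W x <= - rho `|x - xs|.
Proof.
move=> Hx; have [_ h2] := sdsd_closed_loop Hx.
rewrite /W (bellman L_fin V_bounded pistar_adm pistar_opt Hx); lra.
Qed.

Section Bounded.
Hypothesis X0_compact : compact X0.
Hypothesis lam_bounded : forall A : set 'rV[R]_nx,
  (exists r : R, forall x, A x -> `|x| <= r) ->
  exists M : R, forall x, A x -> `|lam x| <= M.

Lemma X0_bounded : exists M : R, forall x, X0 x -> `|x| <= M.
Proof.
have [M [_ HM]] := compact_bounded X0_compact.
by exists (M + 1) => x Hx; apply: (HM (M + 1)) => //; lra.
Qed.

Lemma W_bounded : exists2 C, 0 <= C & forall x, X0 x -> `|W x| <= C.
Proof.
have [Ml HMl] := lam_bounded X0_bounded.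
exists (`|MV| + `|Ml|); first by apply: addr_ge0; exact: normr_ge0.
move=> x Hx; apply: le_trans (ler_normD _ _) _; apply: lerD.
  exact: le_trans (Vstar_fin V_bounded Hx).2 (ler_norm _).
exact: le_trans (HMl x Hx) (ler_norm _).
Qed.

(* Iterating the discounted decrease [N] times gives
   [W x >= - gamma ^ N * C]; letting [N] grow, [W] is nonnegative. *)
Lemma W_ge0 x : X0 x -> 0 <= W x.
Proof.
have [C C0 WC] := W_bounded.
have Wlow N y : X0 y -> - (gamma ^+ N * C) <= W y.
  elim: N y => [|N IH] y Hy.
    by rewrite expr0 mul1r; have := WC y Hy; rewrite ler_norml => /andP[].
  have h1 := IH _ (X0_step Hy); have h2 := W_discounted_decrease Hy.
  have h3 := classK_ge0 rhoK (normr_ge0 (y - xs)).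
  have g0 := gamma_gt0; rewrite exprS -mulrA; nra.
move=> Hx; apply/ler_addgt0Pr => e e0.
have hc : (fun n => gamma ^+ n * C) @ \oo --> 0.
  rewrite -(mul0r C); apply: cvgM; last exact: cvg_cst.
  by apply: cvg_expr; rewrite ger0_norm ?gamma_lt1 // ltW.
have /cvgrPdist_lt/(_ e e0) := hc; case => N _ HN.
have := HN N (leqnn N); rewrite sub0r normrN => hN.
have := Wlow N x Hx; have := ler_norm (gamma ^+ N * C); lra.
Qed.

Lemma W_lower_bound x : X0 x -> rho `|x - xs| <= W x.
Proof.
move=> Hx; have := W_discounted_decrease Hx; have := W_ge0 (X0_step Hx).
have := ltW gamma_gt0; nra.
Qed.

Section Steady.
Hypothesis L_infty : forall x u, ~ Zset h (x, u) -> L x u = +oo%E.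
Hypothesis steady : xs = f xs us.
Hypothesis L_steady : L xs us = 0%E.

Lemma steady_feasible : Zset h (xs, us).
Proof.
by case: (pselect (Zset h (xs, us))) => // hn; move: (L_infty hn); rewrite L_steady.
Qed.

Lemma steady_X0 : X0 xs.
Proof.
have Zs := steady_feasible.
by exists (fun _ => us) => k; rewrite (traj_steady (esym steady) k).
Qed.

(* Staying at the steady state costs nothing and can be extended to an
   admissible policy, hence [V xs <= 0]. *)
Lemma Vstar_steady_le0 : (V xs <= 0)%E.
Proof.
pose pi x := if x == xs then us else pistar x.
have pi_adm : Piset f h pi.
  move=> x0 Hx0.
  have inv k : traj f pi x0 k = xs \/ X0 (traj f pi x0 k).
    elim: k => [|k IH]; first by right.
    rewrite trajS /pi; case: eqP => [->|hne]; first by left; rewrite -steady.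
    by case: IH => // hX; right; exact: X0_step.
  move=> k; rewrite /pi; case: eqP => [->|hne]; first exact: steady_feasible.
  by case: (inv k) => // hX; exact: (Piset_step pistar_adm hX).2.
have pi_xs k : traj f pi xs k = xs by apply: traj_steady; rewrite /pi eqxx.
have cost0 : dcost gamma f L pi xs = 0%E.
  rewrite /dcost /=.
  have -> : (fun n => (\sum_(0 <= k < n) ((gamma ^+ k)%:E *
      L (traj f pi xs k) (pi (traj f pi xs k))))%E) = fun _ => 0%E.
    by apply/funext => n; apply: big1 => k _; rewrite pi_xs /pi eqxx L_steady mule0.
  case: asboolP => [_|]; first exact: (lim_cst (@ereal_hausdorff R)).
  by move=> hn; exfalso; apply: hn; exact: is_cvg_cst.
by rewrite -cost0; apply: ereal_inf_lbound; exists pi.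
Qed.

Hypothesis lam_cont : {for xs, continuous lam}.
Hypothesis lam_steady : lam xs = 0.
Hypothesis V_cont : {for xs, continuous V}.

(* [W] is continuous at [xs] with [W xs <= 0], so it is small near [xs]. *)
Lemma W_small_near_steady e : 0 < e ->
  exists2 r, 0 < r & forall x, `|x - xs| < r -> W x < e.
Proof.
move=> e0; have [Vxs _] := Vstar_fin V_bounded steady_X0.
have Wxs : W xs <= 0.
  by rewrite /W lam_steady addr0 -lee_fin -Vxs; exact: Vstar_steady_le0.
have cV : V x @[x --> xs] --> (fine (V xs))%:E by rewrite -Vxs; exact: V_cont.
have cW : (fun x => fine (V x) + lam x) @ xs --> W xs.
  exact: (cvgD (fine_cvg cV) lam_cont).
move/cvgrPdist_lt: cW => /(_ e e0) /nbhs_ballP [r r0 Hr].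
exists r => // x hx.
have : `|W xs - W x| < e by apply: Hr; rewrite -ball_normE /= distrC.
rewrite distrC; have := ler_norm (W x - W xs); lra.
Qed.

(* Property (b): [W] is bounded, nonnegative and small near [xs], hence
   dominated by a class-K function of the distance to [xs]. *)
Lemma W_upper_bound : exists alpha : R -> R, classK alpha /\
  forall x, X0 x -> W x <= alpha `|x - xs|.
Proof.
have [C C0 WC] := W_bounded.
pose Q s d := exists2 x, X0 x & s = `|x - xs| /\ d = W x.
have [alpha [alphaK Halpha]] : exists alpha : R -> R,
    classK alpha /\ forall s d, Q s d -> d <= alpha s.
  apply: (K_bound_exists C0).
  - move=> s d [x Hx [-> ->]]; split; [exact: normr_ge0|exact: W_ge0|].
    by have := WC x Hx; rewrite ler_norml => /andP[].
  - move=> e e0; have [r r0 Hr] := W_small_near_steady e0.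
    exists (r / 2); first by rewrite divr_gt0.
    by move=> s d [x Hx [-> ->]] hs; apply/ltW/Hr; lra.
by exists alpha; split => // x Hx; apply: Halpha; exists x.
Qed.

End Steady.

End Bounded.

End RotatedValue.

Theorem theorem2 (R : realType) (nx nu nh : nat)
  (f : 'rV[R]_nx -> 'rV[R]_nu -> 'rV[R]_nx)
  (L : 'rV[R]_nx -> 'rV[R]_nu -> \bar R)
  (h : 'rV[R]_nx -> 'rV[R]_nu -> 'rV[R]_nh)
  (gamma : R) (xs : 'rV[R]_nx) (us : 'rV[R]_nu)
  (lam : 'rV[R]_nx -> R) (rho : R -> R)
  (pistar : 'rV[R]_nx -> 'rV[R]_nu) :
  (* discount factor *)
  0 < gamma < 1 ->
  (* convention: L = +oo outside Z *)
  (forall x u, ~ Zset h (x, u) -> L x u = +oo%E) ->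
  (* steady state, normalized *)
  xs = f xs us -> L xs us = 0%E ->
  (* A1 *)
  compact (Zset h) -> compact (X0set f h) ->
  (forall x u, Zset h (x, u) -> L x u \is a fin_num) ->
  (* A2 (SDSD) *)
  {for xs, continuous lam} ->
  (forall A : set 'rV[R]_nx, (exists r : R, forall x, A x -> `|x| <= r) ->
     exists M : R, forall x, A x -> `|lam x| <= M) ->
  lam xs = 0 ->
  classK rho ->
  (forall x u, Zset h (x, u) ->
     ((rho `|x - xs|)%:E <= L x u + (lam x)%:E - (gamma * lam (f x u))%:E)%E) ->
  (forall x u, Zset h (x, u) ->
     ((rho `|x - xs|)%:E <= L x u + (lam x)%:E - (lam (f x u))%:E
                        + (gamma - 1)%:E * Vstar gamma f h L (f x u))%E) ->
  (* A3 *)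
  {for xs, continuous (Vstar gamma f h L)} ->
  (exists M : R, forall x, X0set f h x -> (`|Vstar gamma f h L x| <= M%:E)%E) ->
  (* pistar is an optimal policy *)
  Piset f h pistar ->
  (forall x0, X0set f h x0 -> dcost gamma f L pistar x0 = Vstar gamma f h L x0) ->
  let W := fun x => fine (Vstar gamma f h L x) + lam x in
  [/\ (forall x, X0set f h x -> rho `|x - xs| <= W x),
      (exists alpha : R -> R, classK alpha /\
         forall x, X0set f h x -> W x <= alpha `|x - xs|),
      (forall x, X0set f h x -> W (f x (pistar x)) - W x <= - rho `|x - xs|) &
      (exists beta : R -> R -> R, classKL beta /\
         forall x0 (k : nat), X0set f h x0 ->
           `|traj f pistar x0 k - xs| <= beta `|x0 - xs| k%:R)].
Proof.
move=> /andP[g0 g1] L_infty steady L_steady _ X0_cpt L_fin lam_cont lam_bnd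
  lam_steady rhoK sdsd1 sdsd2 V_cont [MV V_bnd] adm opt W.
have W_dec := W_decrease L_fin V_bnd adm opt sdsd1 sdsd2.
have W_low := W_lower_bound g0 g1 L_fin V_bnd adm opt rhoK sdsd1 sdsd2 X0_cpt lam_bnd.
have [alpha [alphaK W_up]] := W_upper_bound g0 g1 L_fin V_bnd adm opt rhoK
  sdsd1 sdsd2 X0_cpt lam_bnd L_infty steady L_steady lam_cont lam_steady V_cont.
split=> //; first by exists alpha.
exact: (lyapunov_KL_estimate (X0_step adm) (X0_bounded X0_cpt) rhoK alphaK
  W_low W_up W_dec).
Qed.
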